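(* Let $\mathcal{A}=\{1,\dots,L\}$, let $Q$ be a pmf on $\mathcal{A}$, let $f:\mathcal{A}\to\mathbb{R}$, and fix an integer $n\ge1$. For real $I$, let $\mathcal{S}_I=\{a^n\in\mathcal{A}^n: E_f(\pi(a^n))\le I\}$ and, whenever $Q^n(\mathcal{S}_I)>0$, define the pmf $P_I$ on $\mathcal{A}^n$ by $P_I(a^n)=Q^n(a^n)/Q^n(\mathcal{S}_I)$ for $a^n\in\mathcal{S}_I$ (and $0$ otherwise), and the average empirical pmf $\bar\pi_I=\sum_{a^n\in\mathcal{A}^n}P_I(a^n)\,\pi(a^n)$. Then $E_f(\bar\pi_I)$ is non-decreasing in $I$: for all $I_1\le I_2$ with $Q^n(\mathcal{S}_{I_1})>0$, we have $E_f(\bar\pi_{I_1})\le E_f(\bar\pi_{I_2})$.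
   Context: $Q^n$ is the iid pmf $Q^n(a^n)=\prod_{i=1}^nQ(a_i)$ and $Q^n(\mathcal{S})=\sum_{a^n\in\mathcal{S}}Q^n(a^n)$. For a pmf $P$ on $\mathcal{A}$, $E_f(P)=\sum_aP(a)f(a)$. The empirical pmf (type) of $a^n$ is $\pi(a^n)=\frac1n[n_1,\dots,n_L]$, where $n_i$ is the number of occurrences of letter $i$ in $a^n$; thus $E_f(\pi(a^n))=\frac1n\sum_{i=1}^nf(a_i)$. *)

From mathcomp Require Import all_boot all_order all_algebra.
Set Implicit Arguments. Unset Strict Implicit. Unset Printing Implicit Defensive.
Import Order.TTheory GRing.Theory Num.Theory.
Local Open Scope ring_scope.

(* Alphabet A = {1..L} is modelled by 'I_L; sequences a^n are n.-tuples. *)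
Section Defs.
Variables (R : realFieldType) (L n : nat).

Definition is_pmf (T : finType) (P : {ffun T -> R}) : Prop :=
  (forall a, 0 <= P a) /\ \sum_a P a = 1.

Definition iidpmf (Q : {ffun 'I_L -> R}) (x : n.-tuple 'I_L) : R :=
  \prod_(i < n) Q (tnth x i).

Definition iidmass (Q : {ffun 'I_L -> R}) (S : {set n.-tuple 'I_L}) : R :=
  \sum_(x in S) iidpmf Q x.

Definition Ef (f : 'I_L -> R) (P : {ffun 'I_L -> R}) : R :=
  \sum_a P a * f a.

Definition emp (x : n.-tuple 'I_L) : {ffun 'I_L -> R} :=
  [ffun a => (count_mem a x)%:R / n%:R].

Definition SI (f : 'I_L -> R) (I : R) : {set n.-tuple 'I_L} :=
  [set x | Ef f (emp x) <= I].

Definition PI (Q : {ffun 'I_L -> R}) (f : 'I_L -> R) (I : R)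
  : {ffun n.-tuple 'I_L -> R} :=
  [ffun x => if x \in SI f I then iidpmf Q x / iidmass Q (SI f I) else 0].

Definition avgemp (Q : {ffun 'I_L -> R}) (f : 'I_L -> R) (I : R)
  : {ffun 'I_L -> R} :=
  [ffun a => \sum_(x : n.-tuple 'I_L) PI Q f I x * emp x a].

End Defs.

Arguments iidpmf {R L} n Q x.
Arguments iidmass {R L} n Q S.
Arguments emp {R L} n x.
Arguments SI {R L} n f I.
Arguments PI {R L} n Q f I.
Arguments avgemp {R L} n Q f I.
Arguments Ef {R L} f P.
Arguments is_pmf {R T} P.

(* E_f(pi_bar_I) is the Q^n-weighted mean of g(a^n) = E_f(pi(a^n)) over S_I.
   Raising I from I1 to I2 only adds sequences with g > I1 to the averaging
   set, while the old mean is at most I1; adding mass at or above the current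
   mean cannot lower a weighted mean. *)

From mathcomp Require Import all_boot all_order all_algebra.
Set Implicit Arguments. Unset Strict Implicit. Unset Printing Implicit Defensive.
Import Order.TTheory GRing.Theory Num.Theory.
Local Open Scope ring_scope.

Section WeightedMean.
Variables (R : realFieldType) (T : finType) (w g : T -> R).
Hypothesis w_ge0 : forall x, 0 <= w x.

Definition wmean (S : {set T}) : R :=
  (\sum_(x in S) w x * g x) / \sum_(x in S) w x.

Lemma wsum_le_const (S : {set T}) (c : R) :
  {in S, forall x, g x <= c} ->
  \sum_(x in S) w x * g x <= c * \sum_(x in S) w x.
Proof.
move=> gS; rewrite mulr_sumr; apply: ler_sum => x xS.
by rewrite [c * _]mulrC ler_wpM2l ?gS.
Qed.

Lemma const_le_wsum (S : {set T}) (c : R) :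
  {in S, forall x, c <= g x} ->
  c * \sum_(x in S) w x <= \sum_(x in S) w x * g x.
Proof.
move=> gS; rewrite mulr_sumr; apply: ler_sum => x xS.
by rewrite [c * _]mulrC ler_wpM2l ?gS.
Qed.

Lemma wmean_le (S : {set T}) (c : R) :
  0 < \sum_(x in S) w x -> {in S, forall x, g x <= c} -> wmean S <= c.
Proof. by move=> mS gS; rewrite ler_pdivrMr // wsum_le_const. Qed.

Lemma wmean_subset_le (S1 S2 : {set T}) (c : R) :
  S1 \subset S2 -> 0 < \sum_(x in S1) w x ->
  {in S1, forall x, g x <= c} -> {in S2 :\: S1, forall x, c <= g x} ->
  wmean S1 <= wmean S2.
Proof.
move=> sS12 m1_gt0 gS1 gD.
have splitS2 (h : T -> R) :
    \sum_(x in S2) h x = \sum_(x in S1) h x + \sum_(x in S2 :\: S1) h x.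
  by rewrite (big_setID S1) /= (setIidPr sS12).
have mD_ge0 : 0 <= \sum_(x in S2 :\: S1) w x by exact: sumr_ge0.
have m2_gt0 : 0 < \sum_(x in S2) w x.
  by rewrite splitS2 (lt_le_trans m1_gt0) // lerDl.
rewrite [wmean S2]/wmean ler_pdivlMr // !splitS2 mulrDr lerD //.
  by rewrite mulfVK // gt_eqF.
by rewrite (le_trans _ (const_le_wsum gD)) // ler_wpM2r // wmean_le.
Qed.

End WeightedMean.

Section ConditionedAverage.
Variables (R : realFieldType) (L n : nat) (Q : {ffun 'I_L -> R}) (f : 'I_L -> R).

Lemma iidpmf_ge0 : (forall a, 0 <= Q a) -> forall x, 0 <= iidpmf n Q x.
Proof. by move=> Q_ge0 x; apply: prodr_ge0 => i _. Qed.

Lemma SI_subset (I1 I2 : R) : I1 <= I2 -> SI n f I1 \subset SI n f I2.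
Proof. by move=> le_I12; apply/subsetP => x; rewrite !inE => /le_trans; apply. Qed.

Lemma Ef_avgemp (I : R) :
  Ef f (avgemp n Q f I) =
  wmean (iidpmf n Q) (fun x => Ef f (emp n x)) (SI n f I).
Proof.
rewrite /Ef /wmean big_distrl /=.
under eq_bigr => a _ do rewrite ffunE big_distrl /=.
rewrite exchange_big /= [RHS]big_mkcond /=; apply: eq_bigr => x _.
under eq_bigr do rewrite -mulrA.
rewrite -big_distrr /= ffunE; case: ifP => _; last by rewrite !mul0r.
by rewrite mulrAC.
Qed.

End ConditionedAverage.

Theorem lemma3 (R : realFieldType) (L n : nat) (Q : {ffun 'I_L -> R})
  (f : 'I_L -> R) (I1 I2 : R) :
  is_pmf Q -> (1 <= n)%N -> I1 <= I2 ->
  0 < iidmass n Q (SI n f I1) ->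
  Ef f (avgemp n Q f I1) <= Ef f (avgemp n Q f I2).
Proof.
move=> [Q_ge0 _] _ le_I12 mass_gt0.
rewrite !Ef_avgemp.
apply: (wmean_subset_le (iidpmf_ge0 Q_ge0) (SI_subset n f le_I12) mass_gt0
          (c := I1)) => x.
- by rewrite inE.
- by rewrite !inE -ltNge => /andP[/ltW].
Qed.
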